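(* For any $n\ge2$ and $D\subseteq[n-1]$, \[ \widetilde{Q}_{n,D}(1,q,q^2,\dots;t,tq,tq^2,\dots)=\frac{1}{(q;q)_n}\sum_{S\subseteq[n]}q^{\operatorname{comaj}(D,S)}t^{|S|}, \] i.e. the specialization $x_i=q^{i-1}$, $y_i=tq^{i-1}$ of $\widetilde{Q}_{n,D}(\mathbf{x};\mathbf{y})$ is as shown, where $(q;q)_n=(1-q)(1-q^2)\cdots(1-q^n)$.
   Context: Let $\mathcal{A}_+=\{1,2,\dots\}$, $\mathcal{A}_-=\{\bar1,\bar2,\dots\}$, and $\mathcal{A}=\mathcal{A}_+\sqcup\mathcal{A}_-$ totally ordered as $1<\bar1<2<\bar2<\cdots$. Set $z_a=x_a$ for $a\in\mathcal{A}_+$ and $z_{\bar b}=y_b$. The super quasisymmetric function is \[ \widetilde{Q}_{n,D}(\mathbf{x};\mathbf{y})=\sum z_{a_1}z_{a_2}\cdots z_{a_n}, \] summed over weakly increasing sequences $a_1\le\cdots\le a_n$ in $\mathcal{A}$ such that $a_i=a_{i+1}\in\mathcal{A}_+$ implies $i\notin D$ and $a_i=a_{i+1}\in\mathcal{A}_-$ implies $i\in D$. For $D\subseteq[n-1]$, $S\subseteq[n]$, the relative comajor index is $\operatorname{comaj}(D,S)=\sum (n-i)$ over all $1\le i\le n-1$ such that either ($i\in D$ and $i+1\notin S$) or ($i\notin D$ and $i\in S$). *)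

From HB Require Import structures.
From mathcomp Require Import all_boot all_order all_algebra.
From mathcomp Require Import all_classical all_reals all_analysis.
Set Implicit Arguments. Unset Strict Implicit. Unset Printing Implicit Defensive.
Import Order.TTheory GRing.Theory Num.Theory.
Local Open Scope ring_scope.

(* Sets of positive integers are encoded as subsets of an ordinal type whose
   elements are labelled by their own value:
     D ⊆ [n-1]  is  D : {set 'I_n}    with 0 ∉ D,
     S ⊆ [n]    is  S : {set 'I_n.+1} with 0 ∉ S.
   nmem A i  tests whether the natural number i belongs to A. *)
Definition nmem (m : nat) (A : {set 'I_m}) (i : nat) : bool :=
  [exists j in A, (j : nat) == i].

Definition comaj (n : nat) (D : {set 'I_n}) (S : {set 'I_n.+1}) : nat :=
  (\sum_(1 <= i < n | (nmem D i && ~~ nmem S i.+1) || (~~ nmem D i && nmem S i))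
      (n - i))%N.

(* Letters of the alphabet A = {1 < 1bar < 2 < 2bar < ...} are encoded by
   natural numbers: 2(k-1) ↦ k, 2(k-1)+1 ↦ kbar; this respects the order.
   The letters <= Mbar are the elements of 'I_(2*M). *)

Definition zspec (R : pzRingType) (q t : R) (c : nat) : R :=
  (if odd c then t else 1) * q ^+ c./2.

(* admissible words a_1 <= ... <= a_n (0-indexed positions 0..n-1):
   for consecutive positions i, i+1 (paper index i+1 =: j),
   a_i <= a_{i+1}; if a_i = a_{i+1} is unbarred then j ∉ D,
   if a_i = a_{i+1} is barred then j ∈ D. *)
Definition admissible (n m : nat) (D : {set 'I_n}) (a : {ffun 'I_n -> 'I_m}) : bool :=
  [forall i : 'I_n, forall j : 'I_n, ((j : nat) == i.+1) ==>
     ((a i <= a j)%N &&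
      ((a i == a j :> nat) ==> (if odd (a i) then nmem D j else ~~ nmem D j)))].

(* Truncation of the specialized super quasisymmetric function to the
   letters 1 < 1bar < ... < M < Mbar. *)
Definition Qtrunc (R : pzRingType) (n : nat) (D : {set 'I_n}) (q t : R) (M : nat) : R :=
  \sum_(a : {ffun 'I_n -> 'I_(2 * M)} | admissible D a)
     \prod_(i < n) zspec q t (a i).

Definition qpoch (R : pzRingType) (q : R) (n : nat) : R :=
  \prod_(1 <= k < n.+1) (1 - q ^+ k).

From HB Require Import structures.
From mathcomp Require Import all_boot all_order all_algebra.
From mathcomp Require Import all_classical all_reals all_analysis.
From mathcomp Require Import ring lra.
Import Order.TTheory GRing.Theory Num.Theory.
Import numFieldNormedType.Exports.
Local Open Scope classical_set_scope.
Local Open Scope ring_scope.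
Set Implicit Arguments. Unset Strict Implicit. Unset Printing Implicit Defensive.

(* Let W_L(k, x) be the specialised sum over admissible words of length k with
   letters below L whose first letter may follow the letter x.  Splitting off
   the words that start with 1 or 1bar, and noticing that a word with all
   letters at least 2 is a word shifted up by one level, which multiplies its
   weight by q^k, gives
     W_(L+2)(k+1, x) = [1 may follow x] W_(L+2)(k, 1)
                       + [1bar may follow x] t W_(L+2)(k, 1bar)
                       + q^(k+1) W_L(k+1, start).
   For x = start this is an affine recursion in L with ratio q^(k+1), so the
   limit acquires the factor 1/(1 - q^(k+1)); by induction on k the limits are
   sums over the barred positions S of q^comaj t^|S|, divided by (q;q)_k. *)

Section ChainSum.
Variables (R : pzSemiRingType) (T : finType).

Definition fcons k (y : T) (g : {ffun 'I_k -> T}) : {ffun 'I_k.+1 -> T} :=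
  [ffun i => oapp g y (unlift ord0 i)].

Lemma big_ffunS k (F : {ffun 'I_k.+1 -> T} -> R) :
  \sum_f F f = \sum_(y : T) \sum_(g : {ffun 'I_k -> T}) F (fcons y g).
Proof.
rewrite pair_big (reindex (fun p : T * {ffun 'I_k -> T} => fcons p.1 p.2)) //=.
exists (fun f => (f ord0, [ffun j => f (lift ord0 j)])).
  move=> [y g] _ /=; rewrite ffunE unlift_none.
  by congr pair; apply/ffunP => j; rewrite !ffunE liftK.
move=> f _; apply/ffunP => i; rewrite !ffunE.
by case: unliftP => [j ->|->] /=; rewrite ?ffunE.
Qed.

Definition prev_letter (x : option T) k (a : {ffun 'I_k -> T}) (i : nat) : option T :=
  if i is j.+1 then omap a (insub j) else x.

Lemma prev_letter_fcons x k y (g : {ffun 'I_k -> T}) (i : 'I_k) :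
  prev_letter x (fcons y g) (lift ord0 i) = prev_letter (Some y) g i.
Proof.
have ik1 : (i < k.+1)%N by exact: leqW.
rewrite lift0 /= insubT /= ffunE.
case: unliftP => [j /(congr1 val) /= ij | /(congr1 val) /= i0]; last by rewrite i0.
by rewrite ij /= valK.
Qed.

Definition chain_weight (w : nat -> option T -> T -> R) x k (a : {ffun 'I_k -> T}) : R :=
  \prod_(i < k) w i (prev_letter x a i) (a i).

Fixpoint chain_sum (w : nat -> option T -> T -> R) k x : R :=
  if k is k'.+1 then \sum_(y : T) w 0%N x y * chain_sum (fun i => w i.+1) k' (Some y)
  else 1.

Lemma chain_weight_fcons w x k y (g : {ffun 'I_k -> T}) :
  chain_weight w x (fcons y g) = w 0%N x y * chain_weight (fun i => w i.+1) (Some y) g.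
Proof.
rewrite /chain_weight big_ord_recl ffunE unlift_none; congr (_ * _).
by apply: eq_bigr => i _; rewrite prev_letter_fcons ffunE liftK lift0.
Qed.

Lemma sum_chain_weight k w x :
  \sum_(a : {ffun 'I_k -> T}) chain_weight w x a = chain_sum w k x.
Proof.
elim: k w x => [|k IHk] w x /=.
  under eq_bigr do rewrite /chain_weight big_ord0.
  by rewrite sumr_const card_ffun card_ord expn0.
rewrite big_ffunS; apply: eq_bigr => y _.
by under eq_bigr do rewrite chain_weight_fcons; rewrite -mulr_sumr IHk.
Qed.

End ChainSum.

Section Words.
Variables (R : comPzRingType) (q t : R).

Definition adm_next (p : bool) (x : option nat) (y : nat) : bool :=
  if x is Some x0 then (x0 <= y)%N && ((x0 == y) ==> (if odd x0 then p else ~~ p))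
  else true.

Fixpoint word_sum (P : nat -> bool) L k (x : option nat) : R :=
  if k is k'.+1 then
    \sum_(y < L) (adm_next (P 0%N) x y)%:R * zspec q t y *
      word_sum (fun j => P j.+1) L k' (Some (val y))
  else 1.

Lemma word_sum_chain P L k (x : option 'I_L) :
  word_sum P L k (omap val x) =
  chain_sum (fun i (z : option 'I_L) (y : 'I_L) =>
    (adm_next (P i) (omap val z) y)%:R * zspec q t y) k x.
Proof.
elim: k P x => [|k IHk] P x //=.
by apply: eq_bigr => y _; rewrite (IHk _ (Some y)).
Qed.

Lemma admissibleE n (D : {set 'I_n}) L (a : {ffun 'I_n -> 'I_L}) :
  admissible D a =
  [forall i : 'I_n, adm_next (nmem D i) (omap val (prev_letter None a i)) (a i)].
Proof.
apply/forallP/forallP => adm_a j.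
  case: j => [[|i] ij] //=; have ii : (i < n)%N by exact: ltnW.
  by rewrite insubT; exact: (implyP (forallP (adm_a (Ordinal ii)) (Ordinal ij))).
apply/forallP => k; apply/implyP => /eqP kj.
by have := adm_a k; rewrite /prev_letter kj valK.
Qed.

Lemma prod_natr_bool (I : finType) (B : pred I) :
  \prod_i (B i)%:R = [forall i, B i]%:R :> R.
Proof.
have [allB | /forallPn [i /negbTE Bi]] := boolP [forall i, B i].
  by rewrite big1 // => i _; rewrite (forallP allB).
by rewrite (bigD1 i) //= Bi mul0r.
Qed.

Lemma Qtrunc_word_sum n (D : {set 'I_n}) M :
  Qtrunc D q t M = word_sum (nmem D) (2 * M) n None.
Proof.
rewrite /Qtrunc (word_sum_chain _ _ None) -sum_chain_weight big_mkcond /=.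
apply: eq_bigr => a _; rewrite /chain_weight [RHS]big_split prod_natr_bool -admissibleE.
by case: (admissible D a); rewrite /= ?mul1r ?mul0r.
Qed.

Lemma zspecSS y : zspec q t y.+2 = q * zspec q t y.
Proof. by rewrite /zspec /= negbK exprS mulrCA. Qed.

Lemma word_sum_shift P L k x :
  word_sum P L.+2 k (Some x.+2) = q ^+ k * word_sum P L k (Some x).
Proof.
elim: k P x => [|k IHk] P x /=; first by rewrite mulr1.
rewrite 2!big_ord_recl /= !mul0r !add0r exprS -mulrA !mulr_sumr.
by apply: eq_bigr => i _; rewrite /bump /= !add1n !ltnS !eqSS negbK zspecSS IHk; ring.
Qed.

Lemma word_sum_split P L k (x : option bool) :
  word_sum P L.+2 k.+1 (omap nat_of_bool x) =
    (adm_next (P 0%N) (omap nat_of_bool x) 0)%:R *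
      word_sum (fun j => P j.+1) L.+2 k (Some 0%N) +
    (adm_next (P 0%N) (omap nat_of_bool x) 1)%:R * t *
      word_sum (fun j => P j.+1) L.+2 k (Some 1%N) +
    q ^+ k.+1 * word_sum P L k.+1 None.
Proof.
rewrite /= 2!big_ord_recl addrA; congr (_ + _ + _).
- by rewrite /zspec /= expr0 !mulr1.
- by rewrite lift0 /zspec /= expr0 !mulr1.
rewrite exprS -mulrA !mulr_sumr; apply: eq_bigr => i _; rewrite !lift0.
have -> : adm_next (P 0%N) (omap nat_of_bool x) i.+2 by case: x => [[]|].
by rewrite zspecSS word_sum_shift /= !mul1r; ring.
Qed.

Definition comaj_step (p : bool) (x : option bool) (y : bool) : bool :=
  if x is Some x0 then (p && ~~ y) || (~~ p && x0) else false.

Definition bit_sum (P : nat -> bool) (k : nat) (x : option bool) : R :=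
  chain_sum (fun i (z : option bool) (y : bool) =>
    t ^+ y * q ^+ ((k - i) * comaj_step (P i) z y)) k x.

Lemma bit_sumS P k x :
  bit_sum P k.+1 x =
  \sum_(b : bool) t ^+ b * q ^+ (k.+1 * comaj_step (P 0%N) x b) *
    bit_sum (fun j => P j.+1) k (Some b).
Proof. by []. Qed.

Definition set_of_bits n (s : {ffun 'I_n -> bool}) : {set 'I_n.+1} :=
  [set i | oapp s false (unlift ord0 i)].

Lemma nmem_set_of_bits n (s : {ffun 'I_n -> bool}) (i : 'I_n) :
  nmem (set_of_bits s) i.+1 = s i.
Proof.
apply/existsP/idP => [[j /andP [jS /eqP ji]] | si].
  by move: jS; rewrite (_ : j = lift ord0 i) ?inE ?liftK //; apply: val_inj.
by exists (lift ord0 i); rewrite inE liftK /= si; apply/eqP.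
Qed.

Lemma comaj_set_of_bits n (D : {set 'I_n}) (s : {ffun 'I_n -> bool}) :
  (\sum_(i < n) (n - i) * comaj_step (nmem D i) (prev_letter None s i) (s i))%N =
  comaj D (set_of_bits s).
Proof.
case: n D s => [|n] D s; first by rewrite big_ord0 /comaj big_geq.
rewrite big_ord_recl muln0 add0n /comaj big_add1 big_mkord [RHS]big_mkcond /=.
have ifE (b : bool) m : ((if b then m else 0) = m * b)%N.
  by case: b; rewrite ?muln1 ?muln0.
apply: eq_bigr => i _; rewrite ifE insubT; first by rewrite add0n leqW.
by move=> ii /=; rewrite -!(nmem_set_of_bits s).
Qed.

Lemma sum_comaj_bit_sum n (D : {set 'I_n}) :
  \sum_(S : {set 'I_n.+1} | ord0 \notin S) q ^+ comaj D S * t ^+ #|S| =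
  bit_sum (nmem D) n None.
Proof.
rewrite /bit_sum -sum_chain_weight.
rewrite (reindex_onto (@set_of_bits n) (fun S => [ffun j => lift ord0 j \in S])) /=.
  apply: eq_big => [s | s _].
    rewrite inE unlift_none /=; apply/eqP/ffunP => j.
    by rewrite ffunE inE liftK.
  rewrite /chain_weight big_split /= mulrC !prodrXr -comaj_set_of_bits.
  congr (_ * _); congr (_ ^+ _).
  rewrite -sum1_card big_mkcond big_ord_recl /= inE unlift_none /= add0n.
  by apply: eq_bigr => j _; rewrite inE liftK.
move=> S S0; apply/setP => i; rewrite inE.
by case: unliftP => [j ->|->] /=; rewrite ?ffunE ?(negbTE S0).
Qed.

End Words.

Section AffineRecursion.
Variable R : archiRealFieldType.

Lemma cvg_affine_recursion0 (r : R) (d e : nat -> R) :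
  `|r| < 1 -> d @ \oo --> 0 -> (forall N, e N.+1 = d N.+1 + r * e N) ->
  e @ \oo --> 0.
Proof.
move=> r1 d0 eS; apply/cvgr0Pnorm_le => eps eps0.
have r_ge0 : 0 <= `|r| by exact: normr_ge0.
have [N0 _ dN0] : \forall N \near \oo, `|d N| <= eps / 2 * (1 - `|r|).
  by apply: (cvgr0Pnorm_le _).1 => //; apply: mulr_gt0; rewrite ?subr_gt0 ?divr_gt0.
have e_bound m : `|e (N0 + m)%N| <= eps / 2 + `|r| ^+ m * `|e N0|.
  elim: m => [|m IHm]; first by rewrite addn0 expr0 mul1r lerDr divr_ge0 ?ltW.
  have dN : `|d (N0 + m).+1| <= eps / 2 * (1 - `|r|).
    by apply: dN0; rewrite /= -addnS leq_addr.
  have reN : `|r| * `|e (N0 + m)%N| <= `|r| * (eps / 2 + `|r| ^+ m * `|e N0|).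
    exact: ler_wpM2l.
  rewrite addnS eS (le_trans (ler_normD _ _)) // normrM exprS -mulrA.
  lra.
have [M _ geomM] : \forall m \near \oo, `|r| ^+ m * `|e N0| <= eps / 2.
  have geom0 : (fun m => `|r| ^+ m * `|e N0|) @ \oo --> 0.
    by rewrite -(mul0r `|e N0|); apply: cvgMr_tmp; apply: cvg_expr; rewrite normr_id.
  apply: filterS ((cvgr0Pnorm_le _).1 geom0 (eps / 2) _); last by rewrite divr_gt0.
  by move=> m; apply: le_trans; rewrite ler_norm.
exists (N0 + M)%N => // N /= NM.
have N0N : (N0 <= N)%N := leq_trans (leq_addr M N0) NM.
have MN : (M <= N - N0)%N by rewrite leq_subRL // addnC.
by rewrite -(subnKC N0N); have := geomM _ MN; have := e_bound (N - N0)%N; lra.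
Qed.

Lemma cvg_affine_recursion (r c : R) (u x : nat -> R) :
  `|r| < 1 -> u @ \oo --> c -> (forall N, x N.+1 = u N.+1 + r * x N) ->
  x @ \oo --> c / (1 - r).
Proof.
move=> r1 uc xS; have r_neq1 : 1 - r != 0.
  by rewrite subr_eq0; apply: contraTneq r1 => <-; rewrite normr1 ltxx.
apply/subr_cvg0; apply: (cvg_affine_recursion0 r1 (proj2 (subr_cvg0 _ _) uc)) => N.
by rewrite xS; field.
Qed.

End AffineRecursion.

Section Limit.
Variables (R : archiRealFieldType) (q t : R).
Hypothesis q_lt1 : `|q| < 1.

Lemma normrXS_lt1 k : `|q ^+ k.+1| < 1.
Proof. by rewrite normrX exprn_ilt1. Qed.

Lemma subr1XS_neq0 k : 1 - q ^+ k.+1 != 0.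
Proof.
by rewrite subr_eq0; apply: contraTneq (normrXS_lt1 k) => <-; rewrite normr1 ltxx.
Qed.

Lemma qpochS k : qpoch q k.+1 = qpoch q k * (1 - q ^+ k.+1).
Proof. by rewrite /qpoch big_nat_recr. Qed.

Lemma qpoch_neq0 k : qpoch q k != 0.
Proof.
elim: k => [|k IHk]; first by rewrite /qpoch big_geq ?oner_neq0.
by rewrite qpochS mulf_neq0 ?subr1XS_neq0.
Qed.

(* The limit form of [word_sum_split], its last term being the fixed point of
   the affine recursion. *)
Lemma bit_sum_qpochS P k (x : option bool) :
  bit_sum q t P k.+1 x / qpoch q k.+1 =
    (adm_next (P 0%N) (omap nat_of_bool x) 0)%:R *
      (bit_sum q t (fun j => P j.+1) k (Some false) / qpoch q k) +
    (adm_next (P 0%N) (omap nat_of_bool x) 1)%:R * t *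
      (bit_sum q t (fun j => P j.+1) k (Some true) / qpoch q k) +
    q ^+ k.+1 * ((bit_sum q t (fun j => P j.+1) k (Some false) / qpoch q k +
                  t * (bit_sum q t (fun j => P j.+1) k (Some true) / qpoch q k)) /
                 (1 - q ^+ k.+1)).
Proof.
have := subr1XS_neq0 k; have := qpoch_neq0 k.
rewrite bit_sumS big_bool qpochS /=.
by case: x => [[]|]; case: (P 0%N) => /= ? ?; rewrite ?muln0 ?muln1; field; apply/andP.
Qed.

Lemma cvg_word_sum k P (x : option bool) :
  (fun N => word_sum q t P (2 * N) k (omap nat_of_bool x)) @ \oo -->
    bit_sum q t P k x / qpoch q k.
Proof.
elim: k P x => [|k IHk] P x.
  by rewrite /bit_sum /= /qpoch big_geq // divr1; exact: cvg_cst.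
pose B b := bit_sum q t (fun j => P j.+1) k (Some b) / qpoch q k.
have splitS N y : word_sum q t P (2 * N.+1) k.+1 (omap nat_of_bool y) =
    (adm_next (P 0%N) (omap nat_of_bool y) 0)%:R *
      word_sum q t (fun j => P j.+1) (2 * N.+1) k (Some 0%N) +
    (adm_next (P 0%N) (omap nat_of_bool y) 1)%:R * t *
      word_sum q t (fun j => P j.+1) (2 * N.+1) k (Some 1%N) +
    q ^+ k.+1 * word_sum q t P (2 * N) k.+1 None.
  by rewrite mulnS add2n word_sum_split.
have IHkS b : (fun N => word_sum q t (fun j => P j.+1) (2 * N.+1) k (Some (nat_of_bool b)))
    @ \oo --> B b.
  by move: (IHk (fun j => P j.+1) (Some b)); rewrite -cvg_shiftS.
have cvg_start : (fun N => word_sum q t P (2 * N) k.+1 None) @ \oo -->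
    (B false + t * B true) / (1 - q ^+ k.+1).
  apply: (cvg_affine_recursion (normrXS_lt1 k)
    (cvgD (IHk _ (Some false)) (cvgMl_tmp (IHk _ (Some true))))) => N.
  by rewrite (splitS N None) /= !mul1r.
rewrite bit_sum_qpochS -cvg_shiftS (eq_cvg _ _ (splitS ^~ x)).
by apply: cvgD; [apply: cvgD|]; apply: cvgMl_tmp; [exact: IHkS false | exact: IHkS true |].
Qed.

End Limit.

Theorem proposition5p9 (R : realType) (n : nat) (D : {set 'I_n}) (q t : R) :
  (2 <= n)%N -> (forall i : 'I_n, i \in D -> (0 < i)%N) -> `|q| < 1 ->
  (fun M : nat => Qtrunc D q t M) @ \oo -->
    (qpoch q n)^-1 *
      \sum_(S : {set 'I_n.+1} | ord0 \notin S) q ^+ comaj D S * t ^+ #|S|.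
Proof.
(* Position 0 carries no constraint, neither in [admissible] nor in [comaj]. *)
move=> _ _ q_lt1.
rewrite sum_comaj_bit_sum mulrC.
under eq_fun do rewrite Qtrunc_word_sum.
exact: (@cvg_word_sum _ q t q_lt1 n (nmem D) None).
Qed.
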